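(* Let $G=(V,E)$ be a connected edge-transitive graph that is not vertex-transitive, with minimum degree $\delta$ and maximum degree $\Delta$. If $\delta\geq 4$, or $\delta=3$ and $\Delta\geq 6$, then $|E|>2|V|-3$. If $\delta\leq 3$ and $\Delta\leq 5$, then either $|E|\leq 2|V|-3$, or $G$ is isomorphic to one of $K_{3,4}$, $K_{3,5}$, $H_{6,10}$.
   Context: All graphs are finite and simple. Vertex-transitive / edge-transitive: the automorphism group acts transitively on vertices / edges. $K_{a,b}$ is the complete bipartite graph. $H_{6,10}$ is the bipartite graph on vertex set $\{0,\dots,15\}$ with parts $\{0,\dots,5\}$ and $\{6,\dots,15\}$ and adjacency: $0:\{6,8,9,10,15\}$, $1:\{7,9,10,12,13\}$, $2:\{6,8,11,12,13\}$, $3:\{6,7,10,11,14\}$, $4:\{9,11,12,14,15\}$, $5:\{7,8,13,14,15\}$. *)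

From mathcomp Require Import all_boot fingroup perm.
Set Implicit Arguments. Unset Strict Implicit. Unset Printing Implicit Defensive.

Section Graphs.
Variable T : finType.
Variable e : rel T.

Definition simple_graph : Prop := symmetric e /\ irreflexive e.

Definition is_aut (f : {perm T}) : Prop := forall x y, e (f x) (f y) = e x y.

Definition vertex_transitive : Prop :=
  forall x y : T, exists f : {perm T}, is_aut f /\ f x = y.

Definition edge_transitive : Prop :=
  forall x y u v : T, e x y -> e u v ->
    exists f : {perm T}, is_aut f /\ [set f x; f y] = [set u; v].

Definition connected_graph : Prop := forall x y : T, connect e x y.

Definition deg (x : T) : nat := #|[set y | e x y]|.

(* minimum and maximum degree (for nonempty T; degrees are < #|T|) *)
Definition mindeg : nat := \big[minn/#|T|]_(x : T) deg x.
Definition maxdeg : nat := \max_(x : T) deg x.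

Definition edges : {set {set T}} :=
  [set A : {set T} | [exists x, exists y, (A == [set x; y]) && e x y]].

End Graphs.

Definition graph_iso (T T' : finType) (e : rel T) (e' : rel T') : Prop :=
  exists f : T -> T', bijective f /\ forall x y, e' (f x) (f y) = e x y.

Definition Kbip (a b : nat) : rel 'I_(a + b) :=
  fun i j => (i < a) != (j < a).

Definition H610_nbr (i : nat) : seq nat :=
  match i with
  | 0 => [:: 6; 8; 9; 10; 15]
  | 1 => [:: 7; 9; 10; 12; 13]
  | 2 => [:: 6; 8; 11; 12; 13]
  | 3 => [:: 6; 7; 10; 11; 14]
  | 4 => [:: 9; 11; 12; 14; 15]
  | 5 => [:: 7; 8; 13; 14; 15]
  | _ => [::]
  end.

Definition H610 : rel 'I_16 :=
  fun i j => (nat_of_ord j \in H610_nbr i) || (nat_of_ord i \in H610_nbr j).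
Arguments Kbip : clear implicits.

From HB Require Import structures.
From mathcomp Require Import all_boot all_fingroup.
From mathcomp Require Import zify.
Set Implicit Arguments. Unset Strict Implicit. Unset Printing Implicit Defensive.

(* Edge-transitivity without vertex-transitivity makes G bipartite, the parts A and B
   being the automorphism orbits of the two ends of an edge; G is then biregular, of
   degrees dA and dB, and its automorphisms act transitively on (A, B)-flags.  Counting
   edges, |E| = |A| dA = |B| dB, which gives the first claim and, when dA <= 3, dB <= 5
   and |E| > 2|V| - 3, leaves only (dA, dB, |B|, |A|) = (3,4,3,4), (3,5,3,5), (3,5,6,10).
   The first two are complete bipartite.  In the last one, the twin classes of A (equal
   neighbourhoods) have a common size dividing dB = 5; size 5 would make G complete
   bipartite, so the neighbourhoods are ten distinct triples of the 6-set B, each point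
   lying in five of them.  The stabiliser of a in A is transitive on its three neighbours,
   hence on their pairs, so all pairs of B covered by some triple are covered equally
   often.  An exhaustive search shows that such a family of triples is a relabelling of
   the blocks of H_{6,10}. *)

(* Lets [bigD1] split the iterated minimum defining [mindeg]. *)
HB.instance Definition _ := SemiGroup.isComLaw.Build nat minn minnA minnC.

Lemma eq_set2 (T : finType) (a b u v : T) :
  [set a; b] = [set u; v] -> u != v -> (a = u /\ b = v) \/ (a = v /\ b = u).
Proof.
move=> E neq_uv.
have : u \in [set a; b] by rewrite E set21.
have : v \in [set a; b] by rewrite E set22.
rewrite !inE => /orP [] /eqP Ev /orP [] /eqP Eu; subst u v;
  by [rewrite eqxx in neq_uv | right | left].
Qed.

Lemma card_pairs_dep (T : finType) (P : pred T) (Q : rel T) :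
  #|[set p : T * T | P p.1 && Q p.1 p.2]| = \sum_(x | P x) #|[set y | Q x y]|.
Proof.
rewrite -sum1dep_card -(pair_big_dep P Q (fun _ _ => 1)) /=.
by apply: eq_bigr => x _; rewrite sum1dep_card.
Qed.

Lemma card3_pair_compl (T : finType) (N : {set T}) x y :
  #|N| = 3 -> x \in N -> y \in N -> x != y -> exists2 z, z \in N & N :\ z = [set x; y].
Proof.
move=> N3 xN yN xy.
have xyN : [set x; y] \subset N by rewrite subUset !sub1set xN yN.
have /cards1P [z Ez] : #|N :\: [set x; y]| == 1.
  by rewrite cardsD (setIidPr xyN) N3 cards2 xy.
have /setDP [zN zxy] : z \in N :\: [set x; y] by rewrite Ez set11.
have Nz : #|N :\ z| = 2 by move: (cardsD1 z N); rewrite zN N3 => -[].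
exists z => //; apply/esym/eqP; rewrite eqEcard cards2 xy Nz leqnn andbT.
by move: zxy; rewrite subUset !sub1set !inE xN yN !andbT negb_or => /andP [zx zy];
  rewrite ![_ == z]eq_sym zx zy.
Qed.

Lemma iso_of_inj (T T' : finType) (e : rel T) (e' : rel T') (g : T' -> T) :
  injective g -> #|T| <= #|T'| -> (forall i j, e (g i) (g j) = e' i j) -> graph_iso e e'.
Proof.
move=> g_inj cardT ge; have [g' gK g'K] := inj_card_bij g_inj cardT.
by exists g'; split; [exists g | move=> x y; rewrite -ge !g'K].
Qed.

Lemma card_set_sum (T : finType) (A : {pred T}) (P : pred T) :
  {subset P <= A} -> #|[set y | P y]| = \sum_(a in A) (P a : nat).
Proof.
move=> PA; rewrite -sum1dep_card -big_mkcondr /=.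
by apply: eq_bigl => y; case Py: (P y); rewrite ?andbT ?andbF ?PA.
Qed.

Section Automorphisms.
Variables (T : finType) (e : rel T).

Definition graph_aut : {set {perm T}} :=
  [set f : {perm T} | [forall x, forall y, e (f x) (f y) == e x y]].

Lemma graph_autP f : reflect (is_aut e f) (f \in graph_aut).
Proof.
rewrite inE; apply: (iffP forallP) => [H x y | H x].
  exact/eqP/(forallP (H x)).
by apply/forallP => y; rewrite H.
Qed.

Lemma group_set_graph_aut : group_set graph_aut.
Proof.
apply/group_setP; split; first by apply/graph_autP => x y; rewrite !perm1.
by move=> f g /graph_autP Hf /graph_autP Hg; apply/graph_autP => x y; rewrite !permM Hg Hf.
Qed.

Canonical graph_aut_group := group group_set_graph_aut.

Lemma aut_orbitP x y :
  reflect (exists2 f, is_aut e f & f x = y) (y \in orbit 'P graph_aut x).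
Proof.
by apply: (iffP orbitP) => -[f /graph_autP Hf <-]; exists f.
Qed.

Lemma orb_aut f x : is_aut e f -> f x \in orbit 'P graph_aut x.
Proof. by move=> Hf; apply/aut_orbitP; exists f. Qed.

Definition nbhd (x : T) : {set T} := [set y | e x y].

Lemma card_nbhd x : #|nbhd x| = deg e x.
Proof. by []. Qed.

Lemma nbhd_aut f x : is_aut e f -> nbhd (f x) = f @: nbhd x.
Proof.
move=> Hf; apply/setP => y.
by rewrite -[y](permKV f) mem_imset ?inE ?Hf //; exact: perm_inj.
Qed.

Lemma deg_aut f x : is_aut e f -> deg e (f x) = deg e x.
Proof. by move=> Hf; rewrite /deg -!/(nbhd _) nbhd_aut // card_imset //; exact: perm_inj. Qed.

Definition codeg (x y : T) : nat := #|[set a | e a x && e a y]|.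

Lemma codegC x y : codeg x y = codeg y x.
Proof. by apply: eq_card => a; rewrite !inE andbC. Qed.

Lemma codeg_aut f x y : is_aut e f -> codeg (f x) (f y) = codeg x y.
Proof.
move=> Hf; rewrite /codeg -[in RHS](card_imset _ (@perm_inj _ f)).
apply: eq_card => a.
by rewrite -[a](permKV f) mem_imset ?inE ?Hf //; exact: perm_inj.
Qed.

End Automorphisms.

Record flag_transitive_bipartition (T : finType) (e : rel T) (A : {set T})
    (dA dB : nat) : Prop := {
  ftb_sym : symmetric e;
  ftb_irr : irreflexive e;
  ftb_cross : forall u v, e u v -> (u \in A) = (v \notin A);
  ftb_degA : {in A, forall a, deg e a = dA};
  ftb_degB : {in ~: A, forall b, deg e b = dB};
  ftb_flag : forall a a' b b', a \in A -> a' \in A -> e a b -> e a' b' ->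
    exists2 f, is_aut e f & f a = a' /\ f b = b';
  ftb_connected : connected_graph e;
  ftb_A0 : exists a, a \in A;
  ftb_B0 : exists b, b \notin A
}.

Section EdgeTransitive.
Variables (T : finType) (e : rel T).
Hypotheses (sg : simple_graph e) (conn : connected_graph e)
  (et : edge_transitive e) (nvt : ~ vertex_transitive e).

Local Notation orb := (orbit 'P (graph_aut e)).

Lemma no_isolated_vertex v : exists w, e v w.
Proof.
have [w|noadj] := pickP (e v); first by exists w.
have only_v x : x = v.
  have /connectP [[|z p] /= pth ->] // := conn v x.
  by move: pth; rewrite noadj.
exfalso; apply: nvt => x y; exists 1%g; split; first by move=> u w; rewrite !perm1.
by rewrite perm1 (only_v x) (only_v y).
Qed.

Section EdgeOrbits.
Variables (x0 y0 : T).
Hypothesis e0 : e x0 y0.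

Lemma edge_image u v : e u v -> exists2 f, is_aut e f & [set f x0; f y0] = [set u; v].
Proof. by move=> euv; have [f [Hf E]] := et e0 euv; exists f. Qed.

Lemma edge_end_notin_orbit : y0 \notin orb x0.
Proof.
apply/negP => y0x0; apply: nvt => x y.
have in_x0 v : v \in orb x0.
  have [w evw] := no_isolated_vertex v; have [f Hf E] := edge_image evw.
  have : v \in [set f x0; f y0] by rewrite E set21.
  rewrite !inE => /orP [] /eqP ->; first exact: orb_aut.
  by apply: orbit_trans y0x0; exact: orb_aut.
have /aut_orbitP [f Hf <-] : y \in orb x by rewrite (orbit_transl _ (in_x0 y)) orbit_sym in_x0.
by exists f.
Qed.

Lemma aut_edge_end f : is_aut e f -> f y0 \notin orb x0.
Proof.
move=> Hf; apply: contra edge_end_notin_orbit => fy0.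
by apply: orbit_trans fy0; rewrite orbit_sym orb_aut.
Qed.

Lemma orbit_cross u v : e u v -> (u \in orb x0) = (v \notin orb x0).
Proof.
have [_ irr] := sg.
move=> euv; have [f Hf /eq_set2[|[<- <-]|[<- <-]]] := edge_image euv.
- by apply: contraTneq euv => ->; rewrite irr.
- by rewrite orb_aut ?aut_edge_end.
- by rewrite (negbTE (aut_edge_end Hf)) orb_aut.
Qed.

Lemma edge_orbit_bipartition :
  flag_transitive_bipartition e (orb x0) (deg e x0) (deg e y0).
Proof.
have [sym irr] := sg.
split => //.
- exact: orbit_cross.
- by move=> a /aut_orbitP [f Hf <-]; rewrite deg_aut.
- move=> b; rewrite inE => bA; have [w ebw] := no_isolated_vertex b.
  have [f Hf /eq_set2[|[fx0 _]|[_ <-]]] := edge_image ebw; last exact: deg_aut.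
    by apply: contraTneq ebw => ->; rewrite irr.
  by move: bA; rewrite -fx0 orb_aut.
- move=> a a' b b' aA a'A eab ea'b'.
  have [f [Hf /eq_set2[|[fa fb]|[fa _]]]] := et eab ea'b'.
  + by apply: contraTneq ea'b' => ->; rewrite irr.
  + by exists f.
  + have : b' \notin orb x0 by rewrite -(orbit_cross ea'b').
    by rewrite -fa (orbit_trans (orb_aut a Hf) aA).
- by exists x0; exact: orbit_refl.
- by exists y0; exact: edge_end_notin_orbit.
Qed.

End EdgeOrbits.

Lemma flag_transitive_bipartition_exists :
  exists A dA dB, flag_transitive_bipartition e A dA dB.
Proof.
have [x0 _] : exists x0 : T, true.
  have [x _|T0] := pickP (@predT T); first by exists x.
  by exfalso; apply: nvt => x; have := T0 x.
have [y0 e0] := no_isolated_vertex x0.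
by exists (orb x0), (deg e x0), (deg e y0); exact: edge_orbit_bipartition.
Qed.

End EdgeTransitive.

Section FlagTransitiveBipartition.
Variables (T : finType) (e : rel T) (A : {set T}) (dA dB : nat).
Hypothesis S : flag_transitive_bipartition e A dA dB.

Lemma edgeA u v : e u v -> u \in A -> v \notin A.
Proof. by move=> euv; rewrite (ftb_cross S euv). Qed.

Lemma edgeB u v : e u v -> u \notin A -> v \in A.
Proof. by move=> euv; rewrite (ftb_cross S euv) negbK. Qed.

Lemma ftb_swap : flag_transitive_bipartition e (~: A) dB dA.
Proof.
have [sym irr cross dgA dgB flag conn [a aA] [b bA]] := S.
split => //.
- by move=> u v /cross; rewrite !inE => ->; rewrite negbK.
- by rewrite setCK.
- move=> b1 b2 a1 a2; rewrite !inE => b1A b2A eba1 eba2.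
  have [f Hf [? ?]] := flag _ _ _ _ (edgeB eba1 b1A) (edgeB eba2 b2A)
    (etrans (sym _ _) eba1) (etrans (sym _ _) eba2).
  by exists f.
- by exists b; rewrite inE.
- by exists a; rewrite inE negbK.
Qed.

Lemma card_edges : #|edges e| = #|A| * dA.
Proof.
pose P := [set p : T * T | (p.1 \in A) && e p.1 p.2].
have -> : edges e = [set [set p.1; p.2] | p in P].
  apply/setP => X; rewrite inE; apply/existsP/imsetP.
  - case=> x /existsP [y /andP [/eqP -> exy]].
    have [xA|xA] := boolP (x \in A); first by exists (x, y); rewrite // inE xA.
    by exists (y, x); rewrite ?inE /= ?(edgeB exy xA) 1?(ftb_sym S) // setUC.
  - case=> [[x y]]; rewrite inE /= => /andP [_ exy] ->.
    by exists x; apply/existsP; exists y; rewrite eqxx.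
rewrite card_in_imset; last first.
  move=> [x y] [x' y']; rewrite !inE /= => /andP [xA exy] /andP [x'A ex'y'].
  have x'y' : x' != y' by apply: contraTneq ex'y' => ->; rewrite (ftb_irr S).
  case/eq_set2 => // -[Ex Ey]; first by rewrite Ex Ey.
  by move: (edgeA ex'y' x'A); rewrite -Ex xA.
rewrite card_pairs_dep -sum_nat_const; apply: eq_bigr => a aA.
exact: (ftb_degA S aA).
Qed.

Lemma deg_cases v : deg e v = dA \/ deg e v = dB.
Proof.
have [vA|vA] := boolP (v \in A); [left; exact: (ftb_degA S) | right].
by apply: (ftb_degB S); rewrite inE.
Qed.

Lemma degA_le_cardB : dA <= #|~: A|.
Proof.
have [a aA] := ftb_A0 S; rewrite -(ftb_degA S aA); apply: subset_leq_card.
by apply/subsetP => y; rewrite !inE => /edgeA ->.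
Qed.

Lemma degA_gt0 : 0 < dA.
Proof.
have [a aA] := ftb_A0 S; have [b bA] := ftb_B0 S.
rewrite -(ftb_degA S aA) card_gt0; apply/set0Pn.
have /connectP [[|z p] /= pth Eb] := ftb_connected S a b.
  by move: bA; rewrite Eb aA.
by move: pth => /andP [eaz _]; exists z; rewrite inE.
Qed.

Lemma ftb_mindeg : mindeg e = minn dA dB.
Proof.
have [a aA] := ftb_A0 S; have [b bA] := ftb_B0 S.
have dgb : deg e b = dB by apply: (ftb_degB S); rewrite inE.
apply/eqP; rewrite eqn_leq; apply/andP; split.
  rewrite leq_min -{1}(ftb_degA S aA) -dgb /mindeg.
  by apply/andP; split; [rewrite (bigD1 a) | rewrite (bigD1 b)]; rewrite //= geq_minl.
apply: (big_ind (fun m => minn dA dB <= m)) => [|m n|v _].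
- by apply: leq_trans (geq_minl _ _) (leq_trans degA_le_cardB (max_card _)).
- by rewrite leq_min => ->.
- by case: (deg_cases v) => ->; rewrite ?geq_minl ?geq_minr.
Qed.

Lemma ftb_maxdeg : maxdeg e = maxn dA dB.
Proof.
have [a aA] := ftb_A0 S; have [b bA] := ftb_B0 S.
have dgb : deg e b = dB by apply: (ftb_degB S); rewrite inE.
apply/eqP; rewrite eqn_leq; apply/andP; split.
  by apply/bigmax_leqP => v _; case: (deg_cases v) => ->; rewrite ?leq_maxl ?leq_maxr.
by rewrite geq_max -{1}(ftb_degA S aA) -dgb !leq_bigmax.
Qed.

Lemma complete_bipartite_iso : dB = #|A| -> graph_iso e (Kbip #|~: A| #|A|).
Proof.
move=> dBA.
have adj a b : a \in A -> b \notin A -> e b a.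
  move=> aA bA; have dgb : #|nbhd e b| = #|A|.
    by rewrite -dBA; apply: (ftb_degB S); rewrite inE.
  have nbA : nbhd e b \subset A by apply/subsetP => y; rewrite inE => /edgeB ->.
  by move: (subset_cardP dgb nbA a); rewrite inE aA.
pose g (i : 'I_(#|~: A| + #|A|)) :=
  match split i with inl j => enum_val j | inr k => enum_val k end.
apply: (@iso_of_inj _ _ _ _ g).
- move=> i j; rewrite /g; case: splitP => [i' Ei|i' Ei]; case: splitP => [j' Ej|j' Ej].
  + by move/enum_val_inj=> E; apply: val_inj; rewrite /= Ei Ej E.
  + by move=> E; have := enum_valP i'; rewrite E inE (enum_valP j').
  + by move=> E; have := enum_valP j'; rewrite -E inE (enum_valP i').
  + by move/enum_val_inj=> E; apply: val_inj; rewrite /= Ei Ej E.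
- by rewrite card_ord addnC cardsC.
have inB (i : 'I_#|~: A|) : enum_val i \notin A by have := enum_valP i; rewrite inE.
move=> i j; rewrite /g /Kbip; case: splitP => i' _; case: splitP => j' _ /=.
- by apply/negbTE/negP => /edgeB /(_ (inB i')); rewrite (negbTE (inB j')).
- by rewrite adj ?enum_valP.
- by rewrite (ftb_sym S) adj ?enum_valP.
- by apply/negbTE/negP => /edgeA /(_ (enum_valP i')); rewrite enum_valP.
Qed.

Lemma nbhd_nonempty a : a \in A -> exists b, e a b.
Proof.
move=> aA; have := degA_gt0; rewrite -(ftb_degA S aA) card_gt0 => /set0Pn [b].
by rewrite inE; exists b.
Qed.

Definition twins (a : T) : {set T} := [set a' in A | nbhd e a' == nbhd e a].

Lemma card_twins_le a a' : a \in A -> a' \in A -> #|twins a| <= #|twins a'|.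
Proof.
move=> aA a'A; have [b eab] := nbhd_nonempty aA; have [b' ea'b'] := nbhd_nonempty a'A.
have [f Hf [fa fb]] := ftb_flag S aA a'A eab ea'b'.
rewrite -(card_imset _ (@perm_inj _ f)); apply/subset_leq_card/subsetP => z /imsetP [y + ->].
rewrite !inE => /andP [yA /eqP Ny].
have Nfy : nbhd e (f y) = nbhd e a' by rewrite nbhd_aut // Ny -nbhd_aut // fa.
have : b' \in nbhd e (f y) by rewrite Nfy inE.
by rewrite inE Nfy eqxx andbT => /(ftb_cross S) ->; rewrite (edgeA ea'b').
Qed.

Lemma card_twins a a' : a \in A -> a' \in A -> #|twins a| = #|twins a'|.
Proof. by move=> aA a'A; apply/eqP; rewrite eqn_leq !card_twins_le. Qed.

Lemma card_le_of_twins a : a \in A -> #|twins a| = dB -> #|T| <= dA + dB.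
Proof.
move=> aA twa.
(* Each neighbour of [a] is adjacent exactly to the twins of [a], so the twins and the
   neighbours of [a] form a connected component. *)
have nbhdB b : b \in nbhd e a -> nbhd e b = twins a.
  rewrite inE => eab; apply/esym/eqP; rewrite eqEcard twa.
  rewrite card_nbhd (ftb_degB S) ?inE ?(edgeA eab) // leqnn andbT.
  apply/subsetP => y; rewrite !inE => /andP [_ /eqP Ny].
  have : b \in nbhd e y by rewrite Ny inE.
  by rewrite inE (ftb_sym S).
pose X := twins a :|: nbhd e a.
have closedX : closed e X.
  suff sub u v : e u v -> u \in X -> v \in X.
    by move=> u v euv; apply/idP/idP; apply: sub; rewrite // (ftb_sym S).
  move=> euv /setUP [|uN].
    by rewrite inE => /andP [_ /eqP Nu]; apply/setUP; right; rewrite -Nu inE.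
  by apply/setUP; left; rewrite -(nbhdB _ uN) inE.
have allX v : v \in X by rewrite -(closed_connect closedX (ftb_connected S a v)) !inE aA eqxx.
rewrite -cardsT addnC -twa -(ftb_degA S aA) (@leq_trans #|X|) //.
  by apply/subset_leq_card/subsetP => v _; exact: allX.
by rewrite cardsU leq_subr.
Qed.

Lemma codeg_nbhd_const a a' x y x' y' : dA = 3 -> a \in A -> a' \in A ->
  x \in nbhd e a -> y \in nbhd e a -> x != y ->
  x' \in nbhd e a' -> y' \in nbhd e a' -> x' != y' ->
  codeg e x y = codeg e x' y'.
Proof.
(* An automorphism mapping the flag (a, z) to (a', z'), where z and z' are the third
   neighbours, maps the pair {x, y} onto {x', y'}. *)
move=> dA3 aA a'A xN yN xy x'N y'N x'y'.
have [z zN Nz] := card3_pair_compl (N := nbhd e a) (etrans (ftb_degA S aA) dA3) xN yN xy.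
have [z' z'N Nz'] := card3_pair_compl (N := nbhd e a') (etrans (ftb_degA S a'A) dA3) x'N y'N x'y'.
have [f Hf [fa fz]] : exists2 f, is_aut e f & f a = a' /\ f z = z'.
  by move: zN z'N; rewrite !inE; exact: (ftb_flag S aA a'A).
have img w : w \in nbhd e a :\ z -> f w \in [set x'; y'].
  by rewrite -Nz' !inE -fa -fz Hf (inj_eq (@perm_inj _ f)).
have := img x; have := img y; rewrite Nz !inE !eqxx orbT => /(_ isT) fy /(_ isT) fx.
have : f x != f y by rewrite (inj_eq (@perm_inj _ f)).
rewrite -(codeg_aut _ _ Hf).
by move: fx fy => /orP [] /eqP -> /orP [] /eqP ->; rewrite ?eqxx // codegC.
Qed.

End FlagTransitiveBipartition.

Lemma dense_biregular (a b dA dB : nat) : a * dA = b * dB ->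
  4 <= minn dA dB \/ minn dA dB = 3 /\ 6 <= maxn dA dB -> 2 * (a + b) < a * dA + 3.
Proof.
move=> E; have mulA k : k <= dA -> a * k <= a * dA by exact: leq_mul.
have mulB k : k <= dB -> b * k <= b * dB by exact: leq_mul.
case: (leqP dA dB) => [dAB | /ltnW dBA] [d4 | [d3 d6]].
- by have := mulA 4 d4; have := mulB 4 (leq_trans d4 dAB); lia.
- by have := mulB 6 d6; subst; lia.
- by have := mulB 4 d4; have := mulA 4 (leq_trans d4 dBA); lia.
- by have := mulA 6 d6; subst; lia.
Qed.

Lemma small_biregular_cases (a b dA dB : nat) : a * dA = b * dB ->
  0 < dA <= dB -> dA <= 3 -> dB <= 5 -> dA <= b -> dB <= a -> 2 * (a + b) < a * dA + 3 ->
  dA = 3 /\ dB = 4 /\ b = 3 /\ a = 4 \/ dA = 3 /\ dB = 5 /\ b = 3 /\ a = 5 \/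
  dA = 3 /\ dB = 5 /\ b = 6 /\ a = 10.
Proof.
move=> E /andP [dA0 dAB] dA3 dB5 dAb dBa dense.
have : dA = 1 \/ dA = 2 \/ dA = 3 by lia.
have : dB = 1 \/ dB = 2 \/ dB = 3 \/ dB = 4 \/ dB = 5 by lia.
by case=> [|[|[|[|]]]] ? [|[|]] ?; subst; lia.
Qed.

Fixpoint bitseqs (n : nat) : seq bitseq :=
  if n is n'.+1 then [seq b :: m | b <- [:: true; false], m <- bitseqs n'] else [:: [::]].

Lemma mem_bitseqs m : m \in bitseqs (size m).
Proof.
elim: m => [|b m IH] //=.
by case: b; rewrite !mem_cat map_f ?orbT.
Qed.

Definition triples : seq (seq nat) :=
  [seq t <- [seq mask m (iota 0 6) | m <- bitseqs 6] | size t == 3].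

Lemma size_triples : size triples = 20.
Proof. by vm_compute. Qed.

Lemma uniq_triples : uniq triples.
Proof. by vm_compute. Qed.

Definition point_count (D : seq (seq nat)) (i : nat) : nat := count (fun t => i \in t) D.

Definition pair_count (D : seq (seq nat)) (i j : nat) : nat :=
  count (fun t => (i \in t) && (j \in t)) D.

Definition regular5 (D : seq (seq nat)) : bool :=
  all (fun i => point_count D i == 5) (iota 0 6).

Definition covered_pair_counts (D : seq (seq nat)) : seq nat :=
  [seq n <- [seq pair_count D i j | i <- iota 0 6, j <- rem i (iota 0 6)] | n != 0].

Definition pair_balanced (D : seq (seq nat)) : bool := all2rel eq_op (covered_pair_counts D).

Definition H610_block (k : nat) : seq nat := [seq i <- iota 0 6 | 6 + k \in H610_nbr i].

Definition relabel (p t : seq nat) : seq nat := sort leq [seq nth 0 p i | i <- t].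

Definition embeds (D : seq (seq nat)) (p : seq nat) : bool :=
  let img := [seq relabel p (H610_block k) | k <- iota 0 10] in uniq img && all (mem D) img.

(* Checks [P] on every extension of [acc] by [n] bits in front, pruning with [ok]; the
   [if] rather than [==>] keeps [vm_compute] out of the pruned subtrees. *)
Fixpoint search (ok P : seq bool -> bool) (n : nat) (acc : seq bool) : bool :=
  if n is n'.+1 then
    all (fun b => if ok (b :: acc) then search ok P n' (b :: acc) else true) [:: true; false]
  else P acc.

Lemma search_sound ok P n acc : search ok P n acc ->
  forall t, size t = n -> (forall m, m < n -> ok (drop m t ++ acc)) -> P (t ++ acc).
Proof.
elim: n acc => [|n IH] acc; first by move=> Pacc [].
move=> srch t; case/lastP: t => [//|t b]; rewrite size_rcons => -[tn] okt.
have okb : ok (b :: acc).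
  by have := okt n (ltnSn n); rewrite -cats1 drop_cat tn ltnn subnn drop0.
have srchb : search ok P n (b :: acc).
  by have := allP srch b; rewrite okb; apply; case: (b).
rewrite -cats1 -catA; apply: (IH _ srchb t tn) => m mn.
by have := okt m (ltnW mn); rewrite -cats1 drop_cat tn mn -catA.
Qed.

(* [s] selects among the last [size s] triples; every point must still be able to lie
   in exactly five selected triples. *)
Definition deg_feasible (s : seq bool) : bool :=
  let m := size triples - size s in
  all (fun i => let d := point_count (mask s (drop m triples)) i in
                (d <= 5) && (5 <= d + point_count (take m triples) i))
      (iota 0 6).

Lemma deg_feasible_drop s m : size s = 20 -> regular5 (mask s triples) ->
  m < 20 -> deg_feasible (drop m s).
Proof.
move=> s20 /allP reg m20.
rewrite /deg_feasible.
have -> : size triples - size (drop m s) = m by rewrite size_drop s20 subKn // ltnW.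
have split_mask : mask s triples =
    mask (take m s) (take m triples) ++ mask (drop m s) (drop m triples).
  by rewrite -mask_cat ?cat_take_drop // !size_take s20 size_triples m20.
apply/allP => i /reg /eqP; rewrite /point_count split_mask count_cat => <-.
by rewrite leq_addl addnC leq_add2l leq_count_mask.
Qed.

Definition design_ok (s : seq bool) : bool :=
  let D := mask s triples in
  if regular5 D && pair_balanced D then has (embeds D) (permutations (iota 0 6)) else true.

(* The search visits 31603 nodes and 1044 5-regular families, of which 12 are balanced:
   the labelled copies of the 2-(6,3,2) design. *)
Lemma design_search : search deg_feasible design_ok 20 [::].
Proof. by vm_compute. Qed.

Lemma balanced_design_embeds s : size s = 20 ->
  regular5 (mask s triples) -> pair_balanced (mask s triples) ->
  exists2 p, perm_eq p (iota 0 6) & embeds (mask s triples) p.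
Proof.
move=> s20 reg bal.
have feas m : m < 20 -> deg_feasible (drop m s ++ [::]).
  by rewrite cats0; exact: deg_feasible_drop.
have := search_sound design_search s20 feas; rewrite cats0 /design_ok reg bal => /hasP [p].
by rewrite mem_permutations; exists p.
Qed.

Lemma mem_relabel p B j : perm_eq p (iota 0 6) -> {subset B <= iota 0 6} -> j < 6 ->
  (nth 0 p j \in relabel p B) = (j \in B).
Proof.
move=> p_perm B6 j6; rewrite mem_sort; apply/mapP/idP => [[j' j'B /eqP]|jB]; last by exists j.
have [p6 p_uniq] : size p = 6 /\ uniq p.
  by rewrite (perm_size p_perm) (perm_uniq p_perm) iota_uniq size_iota.
have := B6 _ j'B; rewrite mem_iota => /= j'6.
by rewrite nth_uniq ?p6 // => /eqP ->.
Qed.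

Lemma H610_sym : symmetric H610.
Proof. by move=> i j; rewrite /H610 orbC. Qed.

Lemma H610_split :
  [/\ forall j j' : 'I_6, H610 (lshift 10 j) (lshift 10 j') = false,
      forall k k' : 'I_10, H610 (rshift 6 k) (rshift 6 k') = false &
      forall (j : 'I_6) (k : 'I_10), H610 (lshift 10 j) (rshift 6 k) = (val j \in H610_block k)].
Proof.
pose adj i i' := (i' \in H610_nbr i) || (i \in H610_nbr i').
have BB : all (fun i => all (fun i' => ~~ adj i i') (iota 0 6)) (iota 0 6) by [].
have AA : all (fun k => all (fun k' => ~~ adj (6 + k) (6 + k')) (iota 0 10)) (iota 0 10) by [].
have BA : all (fun i => all (fun k => adj i (6 + k) == (i \in H610_block k)) (iota 0 10))
  (iota 0 6) by [].
have in_iota n (i : 'I_n) : val i \in iota 0 n by rewrite mem_iota ltn_ord.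
split => [j j' | k k' | j k].
- by apply/negbTE; exact: (allP (allP BB _ (in_iota _ j)) _ (in_iota _ j')).
- by apply/negbTE; exact: (allP (allP AA _ (in_iota _ k)) _ (in_iota _ k')).
- by apply/eqP; exact: (allP (allP BA _ (in_iota _ j)) _ (in_iota _ k)).
Qed.

Section DesignCase.
Variables (T : finType) (e : rel T) (A : {set T}).
Hypothesis S : flag_transitive_bipartition e A 3 5.
Hypotheses (cardB : #|~: A| = 6) (cardA : #|A| = 10).
Variable a0 : T.
Hypothesis a0A : a0 \in A.

Definition bvert (i : nat) : T := nth a0 (enum (~: A)) i.

Lemma size_enumB : size (enum (~: A)) = 6.
Proof. by rewrite -cardE cardB. Qed.

Lemma bvertB i : i < 6 -> bvert i \notin A.
Proof.
move=> i6; have : bvert i \in enum (~: A) by apply: mem_nth; rewrite size_enumB.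
by rewrite mem_enum inE.
Qed.

Lemma bvert_inj i j : i < 6 -> j < 6 -> bvert i = bvert j -> i = j.
Proof. by move=> i6 j6 /eqP; rewrite nth_uniq ?enum_uniq ?size_enumB // => /eqP. Qed.

Lemma bvert_onto b : b \notin A -> exists2 i, i < 6 & bvert i = b.
Proof.
move=> bA; have bB : b \in enum (~: A) by rewrite mem_enum inE.
by exists (index b (enum (~: A))); [rewrite -size_enumB index_mem | rewrite /bvert nth_index].
Qed.

Definition code (a : T) : seq nat := [seq i <- iota 0 6 | e a (bvert i)].

Lemma mem_code a i : (i \in code a) = (i < 6) && e a (bvert i).
Proof. by rewrite mem_filter mem_iota andbC. Qed.

Lemma nbhd_codeE a : a \in A -> nbhd e a =i [seq bvert i | i <- code a].
Proof.
move=> aA y; rewrite inE; apply/idP/mapP => [eay | [i + ->]]; last by rewrite mem_code => /andP [].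
have [i i6 Ei] := bvert_onto (edgeA S eay aA).
by exists i; rewrite // mem_code i6 Ei.
Qed.

Lemma code_triple a : a \in A -> code a \in triples.
Proof.
move=> aA; rewrite mem_filter; apply/andP; split.
  have uniq_img : uniq [seq bvert i | i <- code a].
    rewrite map_inj_in_uniq ?filter_uniq ?iota_uniq // => i j.
    by rewrite !mem_code => /andP [i6 _] /andP [j6 _]; exact: bvert_inj.
  rewrite -(size_map bvert) -(card_uniqP uniq_img) -(eq_card (nbhd_codeE aA)).
  by rewrite card_nbhd (ftb_degA S aA).
rewrite /code filter_mask; apply/mapP; exists [seq e a (bvert i) | i <- iota 0 6] => //.
by have := mem_bitseqs [seq e a (bvert i) | i <- iota 0 6]; rewrite size_map size_iota.
Qed.

Lemma code_eq a a' : a \in A -> a' \in A -> (code a == code a') = (nbhd e a == nbhd e a').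
Proof.
move=> aA a'A; apply/eqP/eqP => [E | N].
  by apply/setP => y; rewrite (nbhd_codeE aA) (nbhd_codeE a'A) E.
by apply: eq_filter => i; rewrite -!(in_set (e _)) -!/(nbhd e _) N.
Qed.

Definition mult (t : seq nat) : nat := #|[set a in A | code a == t]|.

Definition blocks : seq (seq nat) := [seq t <- triples | 0 < mult t].

Local Notation c := #|twins e A a0|.

Lemma mult_code a : a \in A -> mult (code a) = c.
Proof.
move=> aA; rewrite -(card_twins S aA a0A); apply: eq_card => a'.
by rewrite !inE; case a'A: (a' \in A); rewrite //= code_eq.
Qed.

Lemma mult_pos t : 0 < mult t -> exists2 a, a \in A & code a = t.
Proof. by rewrite card_gt0 => /set0Pn [a]; rewrite inE => /andP [aA /eqP]; exists a. Qed.

Lemma multE t : mult t = c * (0 < mult t).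
Proof.
have [->|mpos] := posnP (mult t); first by rewrite muln0.
by rewrite muln1; have [a aA <-] := mult_pos mpos; exact: mult_code.
Qed.

Lemma sum_code (F : seq nat -> nat) :
  \sum_(a in A) F (code a) = c * \sum_(t <- blocks) F t.
Proof.
have sel a : a \in A -> F (code a) = \sum_(t <- triples) (code a == t) * F t.
  move=> aA; rewrite (bigD1_seq (code a)) ?code_triple ?uniq_triples //= eqxx mul1n.
  by rewrite big1 ?addn0 // => t; rewrite eq_sym => /negbTE ->.
rewrite (eq_bigr _ sel) exchange_big big_distrr /blocks [in RHS]big_filter [in RHS]big_mkcond.
apply: eq_bigr => t _; rewrite -big_distrl /=.
have -> : \sum_(a in A) (code a == t : nat) = mult t by rewrite /mult -sum1dep_card -big_mkcondr.
by rewrite [in LHS]multE; case: (0 < mult t); rewrite ?muln1 ?muln0.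
Qed.

Lemma deg_bvert i : i < 6 -> deg e (bvert i) = c * point_count blocks i.
Proof.
move=> i6; rewrite -card_nbhd (card_set_sum (A := A)) => [|a]; last first.
  by rewrite unfold_in => /(edgeB S); apply; exact: bvertB.
rewrite (eq_bigr (fun a => (i \in code a) : nat)) => [|a aA]; last first.
  by rewrite mem_code i6 (ftb_sym S).
by rewrite (sum_code (fun t => (i \in t) : nat)) /point_count -sum1_count [in RHS]big_mkcond.
Qed.

Lemma codeg_bvert i j : i < 6 -> j < 6 -> codeg e (bvert i) (bvert j) = c * pair_count blocks i j.
Proof.
move=> i6 j6; rewrite /codeg (card_set_sum (A := A)) => [|a]; last first.
  rewrite unfold_in => /andP [eai _].
  by apply: contraTT (bvertB i6) => /(edgeB S eai); rewrite negbK.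
rewrite (eq_bigr (fun a => ((i \in code a) && (j \in code a)) : nat)) => [|a aA].
  rewrite (sum_code (fun t => ((i \in t) && (j \in t)) : nat)).
  by rewrite /pair_count -sum1_count [in RHS]big_mkcond.
by rewrite !mem_code i6 j6.
Qed.

Lemma card_twins1 : c = 1.
Proof.
have cardT : #|T| = 16 by rewrite -(cardsC A) cardA cardB.
have deg5 : 5 = c * point_count blocks 0.
  by rewrite -deg_bvert // (ftb_degB S) // inE bvertB.
have c_dvd : c %| 5 by rewrite deg5 dvdn_mulr.
have /primeP [_ /(_ c c_dvd) /orP [/eqP // | /eqP c5]] : prime 5 by [].
by have := card_le_of_twins S a0A c5; rewrite cardT.
Qed.

Lemma blocks_regular : regular5 blocks.
Proof.
apply/allP => i; rewrite mem_iota => /= i6.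
by have := deg_bvert i6; rewrite card_twins1 mul1n (ftb_degB S) ?inE ?bvertB // => <-.
Qed.

Lemma covered_pair i j : i < 6 -> j < 6 -> pair_count blocks i j != 0 ->
  exists2 a, a \in A & e a (bvert i) && e a (bvert j).
Proof.
move=> i6 j6; rewrite -lt0n -has_count => /hasP [t].
rewrite mem_filter => /andP [/mult_pos [a aA <-] _]; rewrite !mem_code i6 j6.
by exists a.
Qed.

Lemma mem_covered_pair_counts n : n \in covered_pair_counts blocks ->
  exists i j, [/\ n = c * pair_count blocks i j, i < 6, j < 6, bvert i != bvert j &
    exists2 a, a \in A & (bvert i \in nbhd e a) && (bvert j \in nbhd e a)].
Proof.
rewrite mem_filter => /andP [n0 /allpairsPdep [i [j [iI jI En]]]]; subst n.
have /andP [ji jI'] : (j != i) && (j \in iota 0 6) by move: jI; rewrite mem_rem_uniq ?iota_uniq.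
move: iI jI'; rewrite !mem_iota => i6 j6.
exists i, j; split => //; first by rewrite card_twins1 mul1n.
  by apply: contra ji => /eqP /(bvert_inj i6 j6) ->.
have [a aA eij] := covered_pair i6 j6 n0.
by exists a; rewrite ?inE.
Qed.

Lemma blocks_balanced : pair_balanced blocks.
Proof.
apply/allrelP => n m.
move=> /mem_covered_pair_counts [i [j [-> i6 j6 ij [a aA /andP [ia ja]]]]].
move=> /mem_covered_pair_counts [i' [j' [-> i'6 j'6 i'j' [a' a'A /andP [i'a' j'a']]]]].
by rewrite -!codeg_bvert // (codeg_nbhd_const S _ aA a'A ia ja ij i'a' j'a' i'j').
Qed.

Lemma blocks_embed_H610 : exists2 p, perm_eq p (iota 0 6) & embeds blocks p.
Proof.
have blocksE : blocks = mask [seq 0 < mult t | t <- triples] triples by exact: filter_mask.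
have s20 : size [seq 0 < mult t | t <- triples] = 20 by rewrite size_map size_triples.
by have := balanced_design_embeds s20; rewrite -blocksE => /(_ blocks_regular blocks_balanced).
Qed.

Definition rep (t : seq nat) : T := odflt a0 [pick a in A | code a == t].

Lemma rep_block t : t \in blocks -> rep t \in A /\ code (rep t) = t.
Proof.
rewrite mem_filter => /andP [/mult_pos [a aA <-] _]; rewrite /rep.
by case: pickP => [a' /andP [a'A /eqP] // | /(_ a)]; rewrite aA eqxx.
Qed.

Section Embedding.
Variable p : seq nat.
Hypotheses (p_perm : perm_eq p (iota 0 6)) (p_emb : embeds blocks p).

Lemma perm_nth_lt (j : 'I_6) : nth 0 p j < 6.
Proof.
have : nth 0 p j \in iota 0 6 by rewrite -(perm_mem p_perm) mem_nth ?(perm_size p_perm).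
by rewrite mem_iota.
Qed.

Lemma perm_nth_inj (j j' : 'I_6) : nth 0 p j = nth 0 p j' -> j = j'.
Proof.
move/eqP; rewrite nth_uniq ?(perm_size p_perm) ?(perm_uniq p_perm) ?iota_uniq //.
by move/eqP/ord_inj.
Qed.

Let blk (k : 'I_10) := relabel p (H610_block k).

Lemma blk_inj : injective blk.
Proof.
move=> k k' Ek; have /andP [uniq_img _] := p_emb.
have := @nth_uniq _ [::] [seq relabel p (H610_block k) | k <- iota 0 10] k k'.
rewrite size_map size_iota !ltn_ord => /(_ isT isT uniq_img).
rewrite !(nth_map 0) ?size_iota // !nth_iota // !add0n -/(blk k) -/(blk k') Ek eqxx.
by move=> /esym/eqP; apply: ord_inj.
Qed.

Lemma rep_blk k : rep (blk k) \in A /\ code (rep (blk k)) = blk k.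
Proof.
have /andP [_ /allP img_blocks] := p_emb.
apply: rep_block; apply: img_blocks; apply/mapP; exists (val k) => //.
by rewrite mem_iota ltn_ord.
Qed.

Lemma rep_blk_adj (j : 'I_6) (k : 'I_10) :
  e (rep (blk k)) (bvert (nth 0 p j)) = (val j \in H610_block k).
Proof.
have blockB : {subset H610_block k <= iota 0 6} by move=> i; rewrite mem_filter => /andP [].
have [_ code_rep] := rep_blk k.
rewrite -(mem_relabel p_perm blockB (ltn_ord j)) -/(blk k) -[X in _ \in X]code_rep.
by rewrite mem_code perm_nth_lt.
Qed.

Definition H610_embedding (i : 'I_(6 + 10)) : T :=
  match split i with inl j => bvert (nth 0 p j) | inr k => rep (blk k) end.

Lemma H610_embedding_inj : injective H610_embedding.
Proof.
move=> i i'; rewrite -(splitK i) -(splitK i') /H610_embedding !unsplitK.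
case: (split i) => [j|k]; case: (split i') => [j'|k'] E /=.
- by rewrite (perm_nth_inj (bvert_inj (perm_nth_lt j) (perm_nth_lt j') E)).
- by have := bvertB (perm_nth_lt j); rewrite E (proj1 (rep_blk k')).
- by have := bvertB (perm_nth_lt j'); rewrite -E (proj1 (rep_blk k)).
- by rewrite (@blk_inj k k') // -(proj2 (rep_blk k)) E (proj2 (rep_blk k')).
Qed.

Lemma H610_embeddingE i i' : e (H610_embedding i) (H610_embedding i') = H610 i i'.
Proof.
have [HBB HAA HBA] := H610_split.
rewrite -(splitK i) -(splitK i') /H610_embedding !unsplitK.
case: (split i) => [j|k]; case: (split i') => [j'|k'] /=.
- rewrite HBB; apply/negbTE/negP => /(edgeB S) /(_ (bvertB (perm_nth_lt j))).
  by rewrite (negbTE (bvertB (perm_nth_lt j'))).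
- by rewrite HBA (ftb_sym S) rep_blk_adj.
- by rewrite H610_sym HBA rep_blk_adj.
- rewrite HAA; apply/negbTE/negP => /(edgeA S) /(_ (proj1 (rep_blk k))).
  by rewrite (proj1 (rep_blk k')).
Qed.

End Embedding.

Lemma H610_iso : graph_iso e H610.
Proof.
have [p p_perm p_emb] := blocks_embed_H610.
apply: (@iso_of_inj _ _ e H610 (H610_embedding p)).
- exact: H610_embedding_inj.
- by rewrite card_ord -(cardsC A) cardA cardB.
- exact: H610_embeddingE.
Qed.

End DesignCase.

Lemma sparse_or_exceptional (T : finType) (e : rel T) (A : {set T}) (dA dB : nat) :
  flag_transitive_bipartition e A dA dB -> dA <= dB -> dA <= 3 -> dB <= 5 ->
  #|edges e| + 3 <= 2 * #|T| \/
  graph_iso e (Kbip 3 4) \/ graph_iso e (Kbip 3 5) \/ graph_iso e H610.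
Proof.
move=> S dAB dA3 dB5.
have E : #|A| * dA = #|~: A| * dB by rewrite -(card_edges S) (card_edges (ftb_swap S)).
have dBA := degA_le_cardB (ftb_swap S); rewrite setCK in dBA.
rewrite (card_edges S) -(cardsC A).
have [sparse | dense] := leqP (#|A| * dA + 3) (2 * (#|A| + #|~: A|)); [by left | right].
have complete m n : #|~: A| = m -> #|A| = n -> dB = n -> graph_iso e (Kbip m n).
  by move=> <- <-; exact: complete_bipartite_iso S.
have [a0 a0A] := ftb_A0 S.
have [[dA' [dB' [cB cA]]] | [[dA' [dB' [cB cA]]] | [dA' [dB' [cB cA]]]]] :=
  small_biregular_cases E (introT andP (conj (degA_gt0 S) dAB)) dA3 dB5
    (degA_le_cardB S) dBA dense; subst dA dB.
- by left; exact: complete.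
- by right; left; exact: complete.
- right; right; exact (H610_iso S cB cA a0A).
Qed.

Theorem lemma3p4 (T : finType) (e : rel T) :
  simple_graph e -> connected_graph e -> edge_transitive e ->
  ~ vertex_transitive e ->
  ((4 <= mindeg e \/ (mindeg e = 3 /\ 6 <= maxdeg e)) ->
     2 * #|T| < #|edges e| + 3) /\
  ((mindeg e <= 3 /\ maxdeg e <= 5) ->
     #|edges e| + 3 <= 2 * #|T| \/
     graph_iso e (Kbip 3 4) \/ graph_iso e (Kbip 3 5) \/ graph_iso e H610).
Proof.
move=> sg conn et nvt.
have [A [dA [dB S]]] := flag_transitive_bipartition_exists sg conn et nvt.
rewrite (ftb_mindeg S) (ftb_maxdeg S); split => [dense | [small_min small_max]].
  rewrite (card_edges S) -(cardsC A); apply: dense_biregular dense.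
  by rewrite -(card_edges S) (card_edges (ftb_swap S)).
have [dAB | /ltnW dBA] := leqP dA dB.
  by apply: (sparse_or_exceptional S); lia.
by apply: (sparse_or_exceptional (ftb_swap S)); lia.
Qed.
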